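(* Let $d\ge 1$ and let $\mathbf{X}$ and $\mathbf{Y}$ be $d$-dimensional random vectors. If $\mathbb{E}\, u(\mathbf{X}) > \mathbb{E}\, u(\mathbf{Y})$ for every $u \in \mathcal{U}$, then $\mathbf{X} \succ_{d} \mathbf{Y}$.
   Context: For $\mathbf{x},\mathbf{y}\in\mathbb{R}^d$ write $\mathbf{y}\preceq_p \mathbf{x}$ if $y_i\le x_i$ for all $i$, and say $\mathbf{x}$ Pareto dominates $\mathbf{y}$, written $\mathbf{x}\succ_p\mathbf{y}$, if $x_i\ge y_i$ for all $i$ and $x_i>y_i$ for some $i$. $\mathcal{U}$ denotes the class of strictly monotonically increasing functions $u:\mathbb{R}^d\to\mathbb{R}$, i.e. $\mathbf{x}\succ_p\mathbf{y}\implies u(\mathbf{x})>u(\mathbf{y})$. The CDF of a random vector $\mathbf{X}$ is $F_{\mathbf{X}}(\mathbf{x})=P(\mathbf{X}\preceq_p\mathbf{x})$. First-order stochastic dominance: $\mathbf{X}\succeq_{\mathrm{FSD}}\mathbf{Y}$ iff $F_{\mathbf{X}}(\mathbf{v})\le F_{\mathbf{Y}}(\mathbf{v})$ for all $\mathbf{v}\in\mathbb{R}^d$; strict first-order stochastic dominance $\mathbf{X}\succ_{\mathrm{FSD}}\mathbf{Y}$ means $\mathbf{X}\succeq_{\mathrm{FSD}}\mathbf{Y}$ and $F_{\mathbf{X}}(\mathbf{v})< F_{\mathbf{Y}}(\mathbf{v})$ for some $\mathbf{v}$ (the same definitions apply to real random variables, $d=1$). Distributional dominance: $\mathbf{X}\succ_{d}\mathbf{Y}$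 iff $\mathbf{X}\succeq_{\mathrm{FSD}}\mathbf{Y}$ and there is $i\in\{1,\dots,d\}$ such that the marginal $X_i$ strictly first-order stochastically dominates the marginal $Y_i$, $X_i\succ_{\mathrm{FSD}}Y_i$. All expectations appearing are assumed to exist. *)

From HB Require Import structures.
From mathcomp Require Import all_boot all_order all_algebra.
From mathcomp Require Import all_classical all_reals all_analysis.
Set Implicit Arguments. Unset Strict Implicit. Unset Printing Implicit Defensive.
Import Order.TTheory GRing.Theory Num.Theory.
Local Open Scope classical_set_scope.
Local Open Scope ring_scope.

Section Defs.
Variable R : realType.
Variable d : nat.

Definition pareto_le (y x : 'I_d -> R) : Prop := forall i, y i <= x i.

Definition pareto_dom (x y : 'I_d -> R) : Prop :=
  (forall i, y i <= x i) /\ exists i, y i < x i.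

(* u ∈ 𝒰 : strictly monotonically increasing *)
Definition strictly_increasing (u : ('I_d -> R) -> R) : Prop :=
  forall x y, pareto_dom x y -> u y < u x.

Variables (dT : measure_display) (T : measurableType dT).

Definition cdf_vec (P : probability T R) (X : T -> 'I_d -> R) (v : 'I_d -> R)
  : \bar R := P [set w | pareto_le (X w) v].

End Defs.

Section Defs1.
Variable R : realType.
Variables (dT : measure_display) (T : measurableType dT).

Definition cdf_real (P : probability T R) (Z : T -> R) (t : R) : \bar R :=
  P [set w | Z w <= t].
End Defs1.

Section Dominance.
Variable R : realType.
Variables (dT1 dT2 : measure_display) (T1 : measurableType dT1)
  (T2 : measurableType dT2) (P1 : probability T1 R) (P2 : probability T2 R).

Definition fsd_vec (d : nat) (X : T1 -> 'I_d -> R) (Y : T2 -> 'I_d -> R) : Prop :=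
  forall v, (cdf_vec P1 X v <= cdf_vec P2 Y v)%E.

Definition fsd_real (X : T1 -> R) (Y : T2 -> R) : Prop :=
  forall t, (cdf_real P1 X t <= cdf_real P2 Y t)%E.
Definition sfsd_real (X : T1 -> R) (Y : T2 -> R) : Prop :=
  fsd_real X Y /\ exists t, (cdf_real P1 X t < cdf_real P2 Y t)%E.

Definition dist_dom (d : nat) (X : T1 -> 'I_d -> R) (Y : T2 -> 'I_d -> R) : Prop :=
  fsd_vec X Y /\ exists i : 'I_d, sfsd_real (fun w => X w i) (fun w => Y w i).
End Dominance.

(* Call D a Pareto lower set if y <= x and x in D imply y in D.  For such D
   and any strictly increasing integrable v, the utility eps * v - 1_D is
   strictly increasing for every eps > 0, so the hypothesis yields
   P(X in D) - P(Y in D) < eps * (E v(X) - E v(Y)) for all eps > 0, hence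
   P(X in D) <= P(Y in D).  The sets {x <= v} and {x_i <= t} give the joint
   and the marginal first-order dominance.
   A suitable v exists: enumerating the pairs (i, q) of a coordinate and a
   rational, v x = sum_n 2^-(n+1) [q_n < x_(i_n)] is bounded and strictly
   increasing (a strict increase in one coordinate crosses a rational), and
   E v(X) = sum_n 2^-(n+1) (1 - F_(X_(i_n))(q_n)) depends only on the marginal
   CDFs.  So if no marginal dominance were strict, all marginal CDFs of X and
   Y would agree, E v(X) = E v(Y), contradicting the hypothesis for u = v. *)

From HB Require Import structures.
From mathcomp Require Import all_boot all_order all_algebra.
From mathcomp Require Import all_classical all_reals all_analysis.
From mathcomp Require Import measurable_realfun lra.
Set Implicit Arguments. Unset Strict Implicit.
Import Order.TTheory GRing.Theory Num.Theory.
Local Open Scope classical_set_scope.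
Local Open Scope ring_scope.

Section GeometricWeights.
Variable R : realType.

Definition geom_weight (n : nat) : R := 1 / (2 ^ (n + 1))%:R.

Lemma geom_weight_gt0 n : 0 < geom_weight n.
Proof. by rewrite /geom_weight divr_gt0 // ltr0n expn_gt0. Qed.

Lemma nneseries_geom_weight : (\sum_(n <oo) (geom_weight n)%:E = 1)%E.
Proof.
have := @cvg_geometric_eseries_half R 1 0.
rewrite expr0 divr1 => /cvg_lim <-; last exact: ereal_hausdorff.
by congr (limn _); apply/funext => n; apply: eq_bigr => k _;
  rewrite /geom_weight addn1.
Qed.

End GeometricWeights.

Section IndicSeries.
Variables (R : realType) (V : Type) (C : nat -> set V).

Lemma weighted_indic_ge0 n x : (0 <= (geom_weight R n * \1_(C n) x)%:E)%E.
Proof. by rewrite lee_fin mulr_ge0 // ltW // geom_weight_gt0. Qed.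

Lemma nneseries_weighted_indic_ge0 x :
  (0 <= \sum_(n <oo) (geom_weight R n * \1_(C n) x)%:E)%E.
Proof. by apply: nneseries_ge0 => n _ _; exact: weighted_indic_ge0. Qed.

Lemma nneseries_weighted_indic_le1 x :
  (\sum_(n <oo) (geom_weight R n * \1_(C n) x)%:E <= 1)%E.
Proof.
rewrite -nneseries_geom_weight; apply: lee_nneseries => [n _ _|n _].
  exact: weighted_indic_ge0.
by rewrite lee_fin ler_piMr ?indic_le1 // ltW // geom_weight_gt0.
Qed.

Definition indic_series (x : V) : R :=
  fine (\sum_(n <oo) (geom_weight R n * \1_(C n) x)%:E).

Lemma indic_seriesE x :
  (indic_series x)%:E = (\sum_(n <oo) (geom_weight R n * \1_(C n) x)%:E)%E.
Proof.
rewrite fineK // ge0_fin_numE ?nneseries_weighted_indic_ge0 //.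
exact: le_lt_trans (nneseries_weighted_indic_le1 x) (ltry 1).
Qed.

Lemma indic_series_ge0 x : 0 <= indic_series x.
Proof. by rewrite -lee_fin indic_seriesE nneseries_weighted_indic_ge0. Qed.

Lemma indic_series_le1 x : indic_series x <= 1.
Proof. by rewrite -lee_fin indic_seriesE nneseries_weighted_indic_le1. Qed.

Lemma lt_indic_series x y m : (forall n, C n x -> C n y) -> C m y -> ~ C m x ->
  indic_series x < indic_series y.
Proof.
move=> Cxy Cmy Cmx; rewrite -lte_fin !indic_seriesE.
have ge0 z k : true -> (0 <= (geom_weight R k * \1_(C k) z)%:E)%E.
  by move=> _; exact: weighted_indic_ge0.
rewrite (@nneseriesD1 _ _ m _ (ge0 x)) //.
rewrite [X in (_ < X)%E](@nneseriesD1 _ _ m _ (ge0 y)) //.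
rewrite !indicE (mem_set Cmy) memNset // mulr0 mulr1 add0e.
set Sx := (\sum_(0 <= k <oo | _) _)%E; set Sy := (\sum_(0 <= k <oo | _) _)%E.
have SxSy : (Sx <= Sy)%E.
  apply: lee_nneseries => [k _ _|k _]; first exact: weighted_indic_ge0.
  rewrite lee_fin ler_wpM2l ?(ltW (geom_weight_gt0 _ _)) // !indicE.
  by case: (boolP (x \in C k)) => // /set_mem/Cxy/mem_set ->.
have Sy_fin : Sy \is a fin_num.
  rewrite ge0_fin_numE; last by apply: nneseries_ge0 => k _ _; exact: ge0.
  apply: (@le_lt_trans _ _ (\sum_(n <oo) (geom_weight R n * \1_(C n) y)%:E)%E).
    by rewrite (@nneseriesD1 _ _ m _ (ge0 y)) // leeDr // weighted_indic_ge0.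
  exact: le_lt_trans (nneseries_weighted_indic_le1 y) (ltry 1).
by rewrite (le_lt_trans SxSy) // lteDr // lte_fin geom_weight_gt0.
Qed.

End IndicSeries.

Arguments indic_series {R V} C x.

Section IndicSeriesIntegral.
Context dT (T : measurableType dT) (R : realType) (V : Type).
Variables (C : nat -> set V) (Z : T -> V).
Hypothesis mC : forall n, measurable (Z @^-1` C n).

Lemma measurable_weighted_indic n :
  measurable_fun setT (fun w => (geom_weight R n * \1_(C n) (Z w))%:E : \bar R).
Proof.
apply/measurable_EFinP; apply: measurable_funM => //.
exact: (measurable_indic (mC n)).
Qed.

Lemma measurable_indic_series : measurable_fun setT (@indic_series R V C \o Z).
Proof.
apply/measurable_EFinP.
rewrite (_ : _ \o _ = fun w => \sum_(n <oo) (geom_weight R n * \1_(C n) (Z w))%:E)%E.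
  apply: ge0_emeasurable_sum => [k x _ _|k _]; first exact: weighted_indic_ge0.
  exact: measurable_weighted_indic.
by apply/funext => w /=; rewrite indic_seriesE.
Qed.

Lemma integral_indic_series (mu : {measure set T -> \bar R}) :
  (\int[mu]_w (indic_series C (Z w))%:E =
   \sum_(n <oo) (geom_weight R n)%:E * mu (Z @^-1` C n))%E.
Proof.
under eq_integral do rewrite indic_seriesE.
rewrite integral_nneseries //; last first.
- by move=> n w _; exact: weighted_indic_ge0.
- exact: measurable_weighted_indic.
congr (limn _); apply/funext => m; apply: eq_bigr => n _.
under eq_integral do rewrite EFinM.
rewrite ge0_integralZl_EFin ?(ltW (geom_weight_gt0 _ _)) //.
- by rewrite (integral_indic _ _ (mC n)) // setIT.
- by apply/measurable_EFinP; exact: (measurable_indic (mC n)).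
Qed.

Lemma integrable_indic_series (P : probability T R) :
  P.-integrable setT (fun w => (indic_series C (Z w))%:E).
Proof.
apply: measurable_bounded_integrable => //.
- by rewrite (le_lt_trans (probability_le1 _ _)) ?ltry.
- exact: measurable_indic_series.
rewrite /bounded_near; near=> M => w _ /=.
rewrite ger0_norm ?indic_series_ge0 //; apply: le_trans (indic_series_le1 _ C _) _.
by near: M; exact: nbhs_pinfty_ge.
Unshelve. all: by end_near.
Qed.

End IndicSeriesIntegral.

Lemma le0_of_forall_lt_scale (R : realFieldType) (c k : R) :
  (forall e, 0 < e -> c < e * k) -> c <= 0.
Proof.
move=> ltck; have [k_le0|k_gt0] := leP k 0.
  by rewrite ltW // (lt_le_trans (ltck 1 ltr01)) // mul1r.
rewrite leNgt; apply/negP => c_gt0.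
by have := ltck (c / k) (divr_gt0 c_gt0 k_gt0); rewrite divfK ?gt_eqF // ltxx.
Qed.

Section ScaleSubIndic.
Context dT (T : measurableType dT) (R : realType) (P : probability T R).
Variables (f : T -> R) (A : set T) (eps : R).
Hypotheses (mA : measurable A) (intf : P.-integrable setT (EFin \o f)).

Let int_scale : P.-integrable setT (fun w => (eps%:E * (f w)%:E)%E).
Proof. exact: integrableZl. Qed.

Let int_indic : P.-integrable setT (fun w => (\1_A w)%:E).
Proof. exact: integrable_indic. Qed.

Lemma integrable_scale_sub_indic :
  P.-integrable setT (fun w => (eps * f w - \1_A w)%:E).
Proof.
by apply: eq_integrable (integrableB _ int_scale int_indic) => // w _.
Qed.

Lemma integral_scale_sub_indic :
  (\int[P]_w (eps * f w - \1_A w)%:E = eps%:E * \int[P]_w (f w)%:E - P A)%E.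
Proof.
under eq_integral do rewrite EFinB EFinM.
rewrite (integralB _ int_scale int_indic) // integralZl //.
by rewrite integral_indic // setIT.
Qed.

End ScaleSubIndic.

Section ParetoOrder.
Variables (R : realType) (d : nat).

Definition rat_upper_halfspace (k : nat) : set ('I_d -> R) :=
  if (unpickle k : option ('I_d * rat)) is Some (i, q)
  then [set x | ratr q < x i] else set0.

Definition rat_utility : ('I_d -> R) -> R := indic_series rat_upper_halfspace.

Lemma strictly_increasing_rat_utility : strictly_increasing rat_utility.
Proof.
move=> x y [yx [j yxj]].
have [q] := rat_in_itvoo yxj; rewrite in_itv /= => /andP[yq qx].
apply: (@lt_indic_series R _ _ y x (pickle (j, q)));
  rewrite /rat_upper_halfspace ?pickleK //=.
- by move=> k; case: unpickle => [[i r]|] //= /lt_le_trans; apply.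
- by move=> /(lt_trans yq); rewrite ltxx.
Qed.

Definition pareto_lower_set (D : set ('I_d -> R)) : Prop :=
  forall x y, pareto_le y x -> D x -> D y.

Lemma strictly_increasing_scale_sub_indic (v : ('I_d -> R) -> R) D eps :
  0 < eps -> pareto_lower_set D -> strictly_increasing v ->
  strictly_increasing (fun x => eps * v x - \1_D x).
Proof.
move=> eps_gt0 lowD incv x y xy; apply: ltr_leD; first by rewrite ltr_pM2l // incv.
rewrite lerN2 !indicE.
case: (boolP (x \in D)) => [/set_mem Dx|_]; last by case: (_ \in _).
by rewrite mem_set //; apply: (lowD x) Dx; case: xy.
Qed.

End ParetoOrder.

Section RandomVector.
Context dT (T : measurableType dT) (R : realType) (d : nat).
Variable Z : T -> 'I_d -> R.
Hypothesis mZ : forall i, measurable_fun setT (fun w => Z w i).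

Lemma measurable_coord_le i t : measurable [set w | Z w i <= t].
Proof.
have := mZ i measurableT (measurable_itv `]-oo, t]).
by rewrite setTI; congr measurable; apply/seteqP; split => w /=; rewrite in_itv.
Qed.

Lemma measurable_pareto_le v : measurable [set w | pareto_le (Z w) v].
Proof.
rewrite (_ : [set w | _] = \bigcap_(i in [set: 'I_d]) [set w | Z w i <= v i]).
  apply: fin_bigcap_measurable => [|i _]; first exact: finite_finset.
  exact: measurable_coord_le.
apply/seteqP; split => w /= Zv i.
- by move=> _; exact: Zv.
- exact: Zv.
Qed.

Lemma preimage_rat_upper_halfspace k :
  Z @^-1` rat_upper_halfspace k =
  if (unpickle k : option ('I_d * rat)) is Some (i, q)
  then ~` [set w | Z w i <= ratr q] else set0.
Proof.
rewrite /rat_upper_halfspace; case: unpickle => [[i q]|] //.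
by apply/seteqP; split => w /=; rewrite ltNge => /negP.
Qed.

Lemma measurable_preimage_rat_upper_halfspace k :
  measurable (Z @^-1` rat_upper_halfspace k).
Proof.
rewrite preimage_rat_upper_halfspace; case: unpickle => [[i q]|] //.
exact/measurableC/measurable_coord_le.
Qed.

Lemma integrable_rat_utility (P : probability T R) :
  P.-integrable setT (fun w => (rat_utility (Z w))%:E).
Proof.
exact/integrable_indic_series/measurable_preimage_rat_upper_halfspace.
Qed.

End RandomVector.

Section Dominance.
Context (R : realType) (dT1 dT2 : measure_display)
  (T1 : measurableType dT1) (T2 : measurableType dT2)
  (P1 : probability T1 R) (P2 : probability T2 R) (d : nat).
Variables (X : T1 -> 'I_d -> R) (Y : T2 -> 'I_d -> R).
Hypotheses (mX : forall i, measurable_fun setT (fun w => X w i))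
  (mY : forall i, measurable_fun setT (fun w => Y w i)).

Lemma fsd_real_not_sfsd_cdfE (i : 'I_d) :
  fsd_real P1 P2 (fun w => X w i) (fun w => Y w i) ->
  ~ sfsd_real P1 P2 (fun w => X w i) (fun w => Y w i) ->
  forall t, cdf_real P1 (fun w => X w i) t = cdf_real P2 (fun w => Y w i) t.
Proof.
move=> fsdXY nsfsdXY t; apply/eqP; rewrite eq_le fsdXY /= leNgt; apply/negP => lt.
by apply: nsfsdXY; split; last exists t.
Qed.

Lemma integral_rat_utility_eq :
  (forall i t, cdf_real P1 (fun w => X w i) t = cdf_real P2 (fun w => Y w i) t) ->
  (\int[P1]_w (rat_utility (X w))%:E = \int[P2]_w (rat_utility (Y w))%:E)%E.
Proof.
move=> cdfE; rewrite !integral_indic_series;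
  try exact: measurable_preimage_rat_upper_halfspace.
congr (limn _); apply/funext => m; apply: eq_bigr => k _; congr (_ * _)%E.
rewrite !preimage_rat_upper_halfspace.
case: unpickle => [[i q]|]; last by rewrite !measure0.
rewrite [LHS](probability_setC P1 (measurable_coord_le mX i _)).
by rewrite [RHS](probability_setC P2 (measurable_coord_le mY i _)) [X in (_ - X)%E]cdfE.
Qed.

Hypothesis H : forall u : ('I_d -> R) -> R, strictly_increasing u ->
  P1.-integrable setT (fun w => (u (X w))%:E) ->
  P2.-integrable setT (fun w => (u (Y w))%:E) ->
  (\int[P1]_w (u (X w))%:E > \int[P2]_w (u (Y w))%:E)%E.

Lemma le_prob_pareto_lower_set (v : ('I_d -> R) -> R) D :
  strictly_increasing v ->
  P1.-integrable setT (fun w => (v (X w))%:E) ->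
  P2.-integrable setT (fun w => (v (Y w))%:E) ->
  pareto_lower_set D -> measurable (X @^-1` D) -> measurable (Y @^-1` D) ->
  (P1 (X @^-1` D) <= P2 (Y @^-1` D))%E.
Proof.
move=> incv intX intY lowD mXD mYD.
have finEX : (\int[P1]_w (v (X w))%:E)%E \is a fin_num :=
  integrable_fin_num measurableT intX.
have finEY : (\int[P2]_w (v (Y w))%:E)%E \is a fin_num :=
  integrable_fin_num measurableT intY.
have finPX : P1 (X @^-1` D) \is a fin_num := fin_num_measure _ _ mXD.
have finPY : P2 (Y @^-1` D) \is a fin_num := fin_num_measure _ _ mYD.
have gap eps : 0 < eps ->
    fine (P1 (X @^-1` D)) - fine (P2 (Y @^-1` D)) <
    eps * (fine (\int[P1]_w (v (X w))%:E) - fine (\int[P2]_w (v (Y w))%:E)).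
  move=> eps_gt0.
  have := H (strictly_increasing_scale_sub_indic eps_gt0 lowD incv)
    (integrable_scale_sub_indic eps mXD intX)
    (integrable_scale_sub_indic eps mYD intY).
  rewrite (integral_scale_sub_indic eps mXD intX).
  rewrite (integral_scale_sub_indic eps mYD intY).
  rewrite -(fineK finEX) -(fineK finEY) -(fineK finPX) -(fineK finPY).
  by rewrite -!EFinM -!EFinB lte_fin mulrBr; lra.
rewrite -(fineK finPX) -(fineK finPY) lee_fin -subr_le0.
exact: le0_of_forall_lt_scale gap.
Qed.

Let le_prob_rat_utility D := @le_prob_pareto_lower_set _ D
  (@strictly_increasing_rat_utility R d)
  (integrable_rat_utility mX P1) (integrable_rat_utility mY P2).

Lemma fsd_vec_of_expected_utility : fsd_vec P1 P2 X Y.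
Proof.
move=> v; have lowD : pareto_lower_set [set x | pareto_le x v].
  by move=> x y yx xv i; exact: le_trans (yx i) (xv i).
exact: le_prob_rat_utility lowD (measurable_pareto_le mX v)
  (measurable_pareto_le mY v).
Qed.

Lemma fsd_real_of_expected_utility i :
  fsd_real P1 P2 (fun w => X w i) (fun w => Y w i).
Proof.
move=> t; have lowD : pareto_lower_set [set x | x i <= t].
  by move=> x y yx xt; exact: le_trans (yx i) xt.
exact: le_prob_rat_utility lowD (measurable_coord_le mX i t)
  (measurable_coord_le mY i t).
Qed.

End Dominance.

Theorem theorem3p1 (R : realType) (dT1 dT2 : measure_display)
  (T1 : measurableType dT1) (T2 : measurableType dT2)
  (P1 : probability T1 R) (P2 : probability T2 R)
  (d : nat) (hd : (0 < d)%N)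
  (X : T1 -> 'I_d -> R) (Y : T2 -> 'I_d -> R)
  (mX : forall i, measurable_fun setT (fun w => X w i))
  (mY : forall i, measurable_fun setT (fun w => Y w i))
  (H : forall u : ('I_d -> R) -> R, strictly_increasing u ->
         P1.-integrable setT (fun w => (u (X w))%:E) ->
         P2.-integrable setT (fun w => (u (Y w))%:E) ->
         (\int[P1]_w (u (X w))%:E > \int[P2]_w (u (Y w))%:E)%E) :
  dist_dom P1 P2 X Y.
Proof.
split; first exact: fsd_vec_of_expected_utility.
apply: contrapT => /forallNP not_sfsd.
have cdfE i := fsd_real_not_sfsd_cdfE
  (fsd_real_of_expected_utility mX mY H i) (not_sfsd i).
have := H _ (@strictly_increasing_rat_utility R d)
  (integrable_rat_utility mX P1) (integrable_rat_utility mY P2).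
by rewrite (integral_rat_utility_eq mX mY cdfE) ltxx.
Qed.
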